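(* Let $n\ge 2$ and consider $x(t+1)=Ax(t)+Bu(t)$, where the columns of $B\in\mathbb{R}^{n\times m}$ are canonical unit vectors, $T$ is the time horizon, and $\mathcal{W}=\sum_{t=0}^{T-1}A^tBB^{\top}(A^t)^{\top}$ is positive definite. Let $P$ and $\Theta_P$ be as in the context. (a) If $A$ is a directed line network, i.e., its only possibly nonzero entries are $a_{q+1,q}$, $q=1,\dots,n-1$, then every entry of $\Theta_P$ outside the first sub-diagonal is zero. (b) If $A$ is a directed ring network, i.e., its only possibly nonzero entries are $a_{q+1,q}$, $q=1,\dots,n-1$, and $a_{1n}$, then every entry of $\Theta_P$ outside the first sub-diagonal and the entry $(1,n)$ is zero. In both cases $\Theta_P$ has the same sparsity structure as $A$.
   Context: $P$ is one of $I$, $\mathcal{W}^{-1}$, $\mathcal{W}^{-2}$, or $vv^{\top}$ with $v$ a unit eigenvector of $\mathcal{W}$ for a simple eigenvalue. $\Theta_P=\sum_{k=1}^{m}\sum_{t=1}^{T-1}\overline{C}_k^{(t)}\overline{O}_k^{(t)}$, where, with $b_k$ the $k$-th column of $B$, $\overline{C}_k^{(t)}=\begin{pmatrix}(A^{t-1})^{\top}PA^tb_k & \cdots & A^{\top}PA^tb_k & PA^tb_k\end{pmatrix}$ and $\overline{O}_k^{(t)}=\begin{pmatrix}b_k & Ab_k&\cdots&A^{t-1}b_k\end{pmatrix}^{\top}$. Entry $(j,i)$ with $j>i$ lies in the $(j-i)$-th sub-diagonal. *)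

From HB Require Import structures.
From mathcomp Require Import all_boot all_order all_algebra.
Set Implicit Arguments. Unset Strict Implicit. Unset Printing Implicit Defensive.
Import Order.TTheory GRing.Theory Num.Theory.
Local Open Scope ring_scope.

Section Defs.
Variable R : realFieldType.

Definition canonical_columns n m (B : 'M[R]_(n, m)) : Prop :=
  forall k : 'I_m, exists i : 'I_n, col k B = delta_mx i 0.

Definition gramian n m (A : 'M[R]_n) (B : 'M[R]_(n, m)) (T : nat) : 'M[R]_n :=
  \sum_(t < T) (A ^+ t *m B *m B^T *m (A ^+ t)^T).

Definition posdef n (W : 'M[R]_n) : Prop :=
  W^T = W /\ forall x : 'cV[R]_n, x != 0 -> 0 < (x^T *m W *m x) 0 0.

Definition admissible_P n (W P : 'M[R]_n) : Prop :=
  P = 1%:M \/ P = invmx W \/ P = invmx W *m invmx W \/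
  exists (v : 'cV[R]_n) (lam : R),
    [/\ W *m v = lam *: v, (v^T *m v) 0 0 = 1,
        mup lam (char_poly W) = 1%N & P = v *m v^T].

Definition Cbar n m (A P : 'M[R]_n) (B : 'M[R]_(n, m)) (k : 'I_m) (t : nat)
  : 'M[R]_(n, t) :=
  \matrix_(i < n, j < t) (((A ^+ (t.-1 - j))^T *m P *m A ^+ t *m col k B) i 0).

Definition Obar n m (A : 'M[R]_n) (B : 'M[R]_(n, m)) (k : 'I_m) (t : nat)
  : 'M[R]_(t, n) :=
  \matrix_(j < t, i < n) ((A ^+ j *m col k B) i 0).

Definition ThetaP n m (A P : 'M[R]_n) (B : 'M[R]_(n, m)) (T : nat) : 'M[R]_n :=
  \sum_(k < m) \sum_(1 <= t < T) (Cbar A P B k t *m Obar A B k t).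

(* 0-based indices: entry (i,j) lies on the first sub-diagonal iff i = j+1 *)
Definition line_network n (A : 'M[R]_n) : Prop :=
  forall i j : 'I_n, (i : nat) != j.+1 -> A i j = 0.

Definition ring_network n (A : 'M[R]_n) : Prop :=
  forall i j : 'I_n, (i : nat) != j.+1 -> ~ ((i : nat) = 0%N /\ (j : nat) = n.-1) ->
    A i j = 0.
End Defs.

From HB Require Import structures.
From mathcomp Require Import all_boot all_order all_algebra zify.
Import Order.TTheory GRing.Theory Num.Theory.
Local Open Scope ring_scope.
Set Implicit Arguments. Unset Strict Implicit. Unset Printing Implicit Defensive.

(* A ring network, and a fortiori a line network, has at most one nonzero
   entry in each row and each column, and this pattern is preserved by
   products and transposition. With canonical input columns the Gramian W is
   then diagonal, hence so is every admissible P (for v v^T because a simple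
   eigenvalue occurs only once on the diagonal of W, so v has a single nonzero
   entry). With x = A^l b_k, which has at most one nonzero entry, and the
   diagonal D = (A^s)^T P A^s, the (i, j) entry of each term of Theta_P is
   D_ii (A x)_i x_j = D_ii A_ij x_j^2, so Theta_P vanishes wherever A does. *)

Section SparseRows.
Variable R : comPzRingType.

(* Each row has at most one nonzero entry, stated in the multiplicative form
   that products preserve. *)
Definition sparse_rows m n (X : 'M[R]_(m, n)) :=
  forall p (i l : 'I_n), i != l -> X p i * X p l = 0.

Definition monomial_pattern n (A : 'M[R]_n) := sparse_rows A /\ sparse_rows A^T.

Lemma sparse_rows1 n : sparse_rows (1%:M : 'M[R]_n).
Proof.
move=> p i l il; rewrite !mxE; have [->|_] := eqVneq p i.
  by rewrite (negbTE il) mulr0.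
by rewrite mul0r.
Qed.

Lemma sparse_rows_mul m n p (X : 'M[R]_(m, n)) (Y : 'M[R]_(n, p)) :
  sparse_rows X -> sparse_rows Y -> sparse_rows (X *m Y).
Proof.
move=> sX sY q i l il; rewrite !mxE mulr_suml big1 // => r _.
rewrite mulr_sumr big1 // => r' _; rewrite mulrACA.
by have [<-|rr'] := eqVneq r r'; [rewrite sY ?mulr0 | rewrite sX ?mul0r].
Qed.

Lemma monomial_pattern_exp n (A : 'M[R]_n) s :
  monomial_pattern A -> monomial_pattern (A ^+ s).
Proof.
case=> sA sAt; elim: s => [|s [IHs IHst]]; rewrite /monomial_pattern.
  by rewrite expr0 trmx1; split; apply: sparse_rows1.
by rewrite exprS -mulmxE trmx_mul; split; apply: sparse_rows_mul.
Qed.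

Lemma monomial_pattern_graph n (A : 'M[R]_n) (f : 'I_n -> 'I_n) :
  injective f -> (forall i j, A i j != 0 -> i = f j) -> monomial_pattern A.
Proof.
move=> f_inj Af.
have mul_eq0 (a b : R) : (a != 0 -> b != 0 -> False) -> a * b = 0.
  have [->|a0] := eqVneq a 0; first by rewrite mul0r.
  have [->|b0] := eqVneq b 0; first by rewrite mulr0.
  by case.
split=> p i l il; rewrite ?mxE; apply: mul_eq0 => /Af Ai /Af Al; move: il.
  by rewrite (f_inj _ _ (etrans (esym Ai) Al)) eqxx.
by rewrite Ai Al eqxx.
Qed.

Lemma diag_mulmx_entry m n (D : 'M[R]_m) (M : 'M[R]_(m, n)) i j :
  is_diag_mx D -> (D *m M) i j = D i i * M i j.
Proof.
by move=> /diag_mxP[d ->]; rewrite mul_diag_mx !mxE eqxx mulr1n.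
Qed.

Lemma is_diag_mx_mul n (D E : 'M[R]_n) :
  is_diag_mx D -> is_diag_mx E -> is_diag_mx (D *m E).
Proof.
by move=> /diag_mxP[d ->] /diag_mxP[e ->]; rewrite mulmx_diag diag_mx_is_diag.
Qed.

Lemma is_diag_mx_sum n I (r : seq I) (P : pred I) (F : I -> 'M[R]_n) :
  (forall i, P i -> is_diag_mx (F i)) -> is_diag_mx (\sum_(i <- r | P i) F i).
Proof.
move=> dF; apply/is_diag_mxP => p q pq; rewrite summxE big1 // => i Pi.
by apply/is_diag_mxP: pq; apply: dF.
Qed.

Lemma is_diag_mx_sparse_conj m n (X : 'M[R]_(m, n)) (D : 'M[R]_m) :
  sparse_rows X -> is_diag_mx D -> is_diag_mx (X^T *m D *m X).
Proof.
move=> sX dD; apply/is_diag_mxP => i j ij; rewrite -mulmxA mxE big1 // => r _.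
by rewrite mxE diag_mulmx_entry // mulrCA sX ?mulr0.
Qed.

Lemma mulmx_sparse_col p n (A : 'M[R]_(p, n)) (x : 'cV[R]_n) i j :
  sparse_rows x^T -> (A *m x) i 0 * x j 0 = A i j * x j 0 ^+ 2.
Proof.
move=> sx; rewrite mxE mulr_suml (bigD1 j) //= big1 ?addr0 => [|r rj].
  by rewrite -mulrA.
by have := sx 0 r j rj; rewrite !mxE -mulrA => ->; rewrite mulr0.
Qed.

End SparseRows.

Section DiagonalField.
Variable F : fieldType.

Lemma is_diag_invmx n (W : 'M[F]_n) :
  is_diag_mx W -> (forall i, W i i != 0) -> is_diag_mx (invmx W).
Proof.
move=> /diag_mxP[d ->] d_neq0.
pose e : 'rV[F]_n := \row_i (d 0 i)^-1.
have de1 : diag_mx d *m diag_mx e = 1%:M.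
  rewrite mulmx_diag -diag_const_mx; congr diag_mx; apply/rowP => i.
  by have := d_neq0 i; rewrite !mxE eqxx mulr1n => /divff.
by rewrite -[invmx _]mulmx1 -de1 mulKmx ?diag_mx_is_diag // (mulmx1_unit de1).1.
Qed.

Lemma mup_char_poly_diag n (W : 'M[F]_n) lam : is_diag_mx W ->
  mup lam (char_poly W) = #|[pred i | W i i == lam]|.
Proof.
move=> /is_diag_mx_is_trig/char_poly_trig ->.
rewrite -(big_map (fun i => W i i) xpredT (fun a => 'X - a%:P)) mu_prod_XsubC.
by rewrite count_map cardE /enum_mem size_filter [index_enum _]unlock.
Qed.

Lemma diag_simple_eigenvalue_uniq n (W : 'M[F]_n) lam (p q : 'I_n) :
  is_diag_mx W -> mup lam (char_poly W) = 1%N -> W p p = lam -> W q q = lam ->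
  p = q.
Proof.
move=> dW; rewrite mup_char_poly_diag // => card1 Wp Wq.
have /card_le1_eqP : (#|[pred i | W i i == lam]| <= 1)%N by rewrite card1.
by apply; rewrite inE ?Wp ?Wq.
Qed.

Lemma diag_eigenvector_support n (W : 'M[F]_n) (v : 'cV[F]_n) lam i :
  is_diag_mx W -> W *m v = lam *: v -> v i 0 != 0 -> W i i = lam.
Proof.
move=> dW /matrixP/(_ i 0); rewrite diag_mulmx_entry // mxE => /eqP.
by rewrite -subr_eq0 -mulrBl mulf_eq0 subr_eq0 => /orP[/eqP //|->].
Qed.

Lemma is_diag_simple_eigenprojector n (W : 'M[F]_n) (v : 'cV[F]_n) lam :
  is_diag_mx W -> W *m v = lam *: v -> mup lam (char_poly W) = 1%N ->
  is_diag_mx (v *m v^T).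
Proof.
move=> dW Wv mup1; apply/is_diag_mxP => i j ij; rewrite !mxE big_ord1 !mxE.
have [->|vi] := eqVneq (v i 0) 0; first by rewrite mul0r.
have [->|vj] := eqVneq (v j 0) 0; first by rewrite mulr0.
by move: ij; rewrite (diag_simple_eigenvalue_uniq dW mup1
  (diag_eigenvector_support dW Wv vi) (diag_eigenvector_support dW Wv vj)) eqxx.
Qed.

End DiagonalField.

Section ControlledNetworks.
Variable R : realFieldType.

Lemma posdef_diag_neq0 n (W : 'M[R]_n) : posdef W -> forall i, W i i != 0.
Proof.
case=> _ W_pos i; have e_neq0 : (delta_mx i 0 : 'cV[R]_n) != 0.
  by apply/negP => /eqP/matrixP/(_ i 0)/eqP; rewrite !mxE eqxx oner_eq0.
by have := W_pos _ e_neq0; rewrite trmx_delta -rowE -colE !mxE => /gt_eqF ->.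
Qed.

Lemma admissible_P_is_diag n (W P : 'M[R]_n) :
  is_diag_mx W -> posdef W -> admissible_P W P -> is_diag_mx P.
Proof.
move=> dW /posdef_diag_neq0 W_neq0 [->|[->|[->|[v [lam [Wv _ mup1 ->]]]]]].
- exact: scalar_mx_is_diag.
- exact: is_diag_invmx.
- by apply: is_diag_mx_mul; apply: is_diag_invmx.
- exact: is_diag_simple_eigenprojector Wv mup1.
Qed.

Lemma canonical_columns_sparse_tr n m (B : 'M[R]_(n, m)) :
  canonical_columns B -> sparse_rows B^T.
Proof.
move=> cB k i l il; have [q /matrixP Bk] := cB k.
have := Bk i 0; have := Bk l 0; rewrite !mxE !andbT => -> ->.
have [<- | _] := eqVneq i q; last by rewrite mul0r.
by rewrite eq_sym (negbTE il) mulr0.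
Qed.

Lemma gramian_is_diag n m (A : 'M[R]_n) (B : 'M[R]_(n, m)) T :
  monomial_pattern A -> canonical_columns B -> is_diag_mx (gramian A B T).
Proof.
move=> mA cB; apply: is_diag_mx_sum => t _.
have [_ sAt] := monomial_pattern_exp t mA.
have sX := sparse_rows_mul (canonical_columns_sparse_tr cB) sAt.
have := is_diag_mx_sparse_conj sX (scalar_mx_is_diag m (1 : R)).
by rewrite mulmx1 trmx_mul !trmxK !mulmxA.
Qed.

Lemma CbarObar_entry n m (A P : 'M[R]_n) (B : 'M[R]_(n, m)) k t i j :
  monomial_pattern A -> canonical_columns B -> is_diag_mx P ->
  (Cbar A P B k t *m Obar A B k t) i j =
  A i j * \sum_(l < t) ((A ^+ (t.-1 - l))^T *m P *m A ^+ (t.-1 - l)) i i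
                         * (A ^+ l *m col k B) j 0 ^+ 2.
Proof.
move=> mA cB dP; rewrite mxE mulr_sumr; apply: eq_bigr => l _.
rewrite [Cbar _ _ _ _ _ _ _]mxE [Obar _ _ _ _ _ _]mxE.
set s := (t.-1 - l)%N; set x := A ^+ l *m col k B.
have expA : A ^+ t = A ^+ s *m A *m A ^+ l.
  by rewrite !mulmxE -exprSr -exprD; congr (_ ^+ _); have := ltn_ord l; lia.
have sx : sparse_rows x^T.
  rewrite trmx_mul; apply: sparse_rows_mul (monomial_pattern_exp l mA).2.
  move=> p a b ab; rewrite !mxE.
  by have := canonical_columns_sparse_tr cB k ab; rewrite !mxE.
have dD : is_diag_mx ((A ^+ s)^T *m P *m A ^+ s).
  exact: is_diag_mx_sparse_conj (monomial_pattern_exp s mA).1 dP.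
have -> : (A ^+ s)^T *m P *m A ^+ t *m col k B
          = ((A ^+ s)^T *m P *m A ^+ s) *m (A *m x).
  by rewrite expA !mulmxA.
by rewrite diag_mulmx_entry // -mulrA mulmx_sparse_col // mulrCA.
Qed.

Lemma ThetaP_support n m (A P : 'M[R]_n) (B : 'M[R]_(n, m)) T i j :
  monomial_pattern A -> canonical_columns B -> is_diag_mx P ->
  A i j = 0 -> ThetaP A P B T i j = 0.
Proof.
move=> mA cB dP Aij; rewrite /ThetaP summxE big1 // => k _.
by rewrite summxE big1 // => t _; rewrite CbarObar_entry // Aij mul0r.
Qed.

Lemma ring_network_support n (A : 'M[R]_n) i j :
  ring_network A -> A i j != 0 -> i = ordS j.
Proof.
move=> rA Aij; apply: val_inj => /=.
have [i_succ | ij] := eqVneq (i : nat) j.+1.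
  by rewrite modn_small -i_succ.
have /andP[/eqP -> /eqP jn] : ((i : nat) == 0%N) && ((j : nat) == n.-1).
  apply: contraTT Aij => ijn; apply/negPn/eqP/rA => // -[/eqP i0 /eqP jn].
  by move: ijn; rewrite i0 jn.
by rewrite jn prednK ?modnn // (leq_ltn_trans _ (ltn_ord j)).
Qed.

Lemma ring_network_monomial n (A : 'M[R]_n) :
  ring_network A -> monomial_pattern A.
Proof.
by move=> rA; apply: (monomial_pattern_graph (@ordS_inj n)) => i j;
  apply: ring_network_support.
Qed.

Lemma line_network_ring n (A : 'M[R]_n) : line_network A -> ring_network A.
Proof. by move=> lA i j ij _; apply: lA. Qed.

End ControlledNetworks.

Theorem corollary4p3 (R : realFieldType) (n m T : nat) (A : 'M[R]_n)
  (B : 'M[R]_(n, m)) (P : 'M[R]_n) :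
  (2 <= n)%N ->
  canonical_columns B ->
  posdef (gramian A B T) ->
  admissible_P (gramian A B T) P ->
  (line_network A ->
     forall i j : 'I_n, (i : nat) != j.+1 -> ThetaP A P B T i j = 0) /\
  (ring_network A ->
     forall i j : 'I_n, (i : nat) != j.+1 ->
       ~ ((i : nat) = 0%N /\ (j : nat) = n.-1) -> ThetaP A P B T i j = 0).
Proof.
move=> _ cB W_pos admP.
have ThetaP_sparse :
    ring_network A -> forall i j, A i j = 0 -> ThetaP A P B T i j = 0.
  move=> /ring_network_monomial mA i j; apply: ThetaP_support => //.
  by apply: admissible_P_is_diag admP => //; apply: gramian_is_diag.
split=> [lA i j ij | rA i j ij ij'].
  exact: ThetaP_sparse (line_network_ring lA) _ _ (lA i j ij).
exact: ThetaP_sparse rA _ _ (rA i j ij ij').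
Qed.
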